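(* Let $X$ be a smooth, pointed, oriented, closed, connected manifold, $\Xi$ a set of DG Morse data on $X$ with Morse function $f$ and twisting cocycle $\{m_{x,y}\}$, and let $\boldsymbol{\varphi}=\{\varphi_n\}_{n\ge1}:(\mathcal{A},\nu^{\mathcal{A}})\to(\mathcal{B},\nu^{\mathcal{B}})$ be a morphism of $\mathcal{A}_\infty$-modules over $C_*(\Omega X)$. Then the map $\tilde\varphi:C_*(X,\Xi,\mathcal{A})\to C_*(X,\Xi,\mathcal{B})$ defined by $$\tilde\varphi=\sum_{n\ge0}(\varphi_{n+1}\otimes1)\tilde{\mathbf m}^n$$ is a morphism of complexes.
   Context: $C_*(\Omega X)$ (normalized cubical chains on Moore based loops) is viewed as an $\mathcal{A}_\infty$-algebra with $\mu_1$ the differential, $\mu_2$ the Pontryagin product and $\mu_i=0$ for $i\ge3$. All functional expressions obey the Koszul sign rule $(f\otimes g)(x\otimes y)=(-1)^{|g||x|}f(x)\otimes g(y)$. An $\mathcal{A}_\infty$-module over $C_*(\Omega X)$ is a graded $\mathbb{Z}$-module $\mathcal{A}$ with maps $\nu_n:\mathcal{A}\otimes C_*(\Omega X)^{\otimes n-1}\to\mathcal{A}$ of degree $n-2$ ($\nu_1$ the differential) such that for all $N\ge1$: $\sum_{s+t=N,s\ge1}(-1)^{st}\nu_{t+1}(\nu_s\otimes1^{\otimes t})+\sum_{r+s+t=N,\,r,s\ge1}(-1)^{r+st}\nu_{r+t+1}(1^{\otimes r}\otimes\mu_s\otimes1^{\otimes t})=0$. A morphism $\boldsymbol\varphi:(\mathcal{A},\nu^A)\to(\mathcal{B},\nu^B)$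 is a family of maps $\varphi_n:\mathcal{A}\otimes C_*(\Omega X)^{\otimes n-1}\to\mathcal{B}$ of degree $n-1$ with, for all $N\ge1$, $\sum_{s+t=N}(-1)^{st}\varphi_{t+1}(\nu^A_s\otimes1^{\otimes t})+\sum_{r+s+t=N,r\ge1}(-1)^{r+st}\varphi_{r+t+1}(1^{\otimes r}\otimes\mu_s\otimes1^{\otimes t})=\sum_{s+t=N}(-1)^{(s+1)t}\nu^B_{t+1}(\varphi_s\otimes1^{\otimes t})$. Twisted complexes: given a twisting cocycle $m_{x,y}\in C_{|x|-|y|-1}(\Omega X)$ ($x,y\in\mathrm{Crit}(f)$, $\partial m_{x,y}=\sum_z(-1)^{|x|-|z|}m_{x,z}m_{z,y}$), set $\mathbf m(x)=\sum_y m_{x,y}\otimes y$ and extend to $\tilde{\mathbf m}$ of degree $-1$ on $\mathcal{A}\otimes TC_*(\Omega X)\otimes\mathbb{Z}\mathrm{Crit}(f)$ by $\tilde{\mathbf m}(\alpha\otimes\gamma_1\otimes\dots\otimes\gamma_k\otimes x)=(1^{\otimes k+1}\otimes\mathbf m)(\alpha\otimes\gamma_1\otimes\dots\otimes\gamma_k\otimes x)$. The complex $C_*(X,\Xi,\mathcal{A})=\mathcal{A}\otimes\mathbb{Z}\mathrm{Crit}(f)$ has differential $\partial=\sum_{n\ge0}(\nu_{n+1}\otimes1)\tilde{\mathbf m}^n$, where $m_{x,y}$ is the Barraud–Cornea twisting cocycle of the DG Morse data $\Xi$ (Morse–Smale pair, orientations, representing chain system of moduli spaces of broken trajectories, tree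 rooted at the basepoint with vertices the critical points, homotopy inverse of the tree collapse). *)

From HB Require Import structures.
From mathcomp Require Import all_boot all_order all_algebra.
Set Implicit Arguments. Unset Strict Implicit. Unset Printing Implicit Defensive.
Import Order.TTheory GRing.Theory Num.Theory.
Local Open Scope ring_scope.

Definition koz (z : int) : int := (-1) ^+ `|z|%N.

(* A grading of a Z-module V: Vd k is the (sub)group of homogeneous elements
   of degree k. *)
Definition graded_sub (V : zmodType) (Vd : int -> {pred V}) : Prop :=
  forall k, 0 \in Vd k /\ (forall u v, u \in Vd k -> v \in Vd k -> u - v \in Vd k).

Section AInfinity.
Variable C : nzRingType.          (* the chain algebra C_*(Omega X) *)
Variable Cd : int -> {pred C}.
Variable d : C -> C.

(* C is a nonnegatively graded DG algebra: mu_1 = d, mu_2 = product, mu_i = 0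
   for i >= 3 (the A_oo relations for such data are exactly these axioms). *)
Definition is_DGA : Prop :=
  graded_sub Cd /\
  [/\ (forall q g, q < 0 -> g \in Cd q -> g = 0),
      (forall p q g h, g \in Cd p -> h \in Cd q -> g * h \in Cd (p + q)),
      1 \in Cd 0,
      (forall g h, d (g + h) = d g + d h) &
  [/\ (forall q g, g \in Cd q -> d g \in Cd (q - 1)),
      (forall g, d (d g) = 0) &
      (forall p g h, g \in Cd p -> d (g * h) = d g * h + (g * d h) *~ koz p)]].

(* homogeneous inputs are carried together with their degrees *)
Definition homs (gs : seq (C * int)) : bool := all (fun gq => gq.1 \in Cd gq.2) gs.
Definition degs (gs : seq (C * int)) : int := \sum_(gq <- gs) gq.2.
Definition els (gs : seq (C * int)) : seq C := map fst gs.

Definition mu (gs : seq C) : C :=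
  match gs with [:: g] => d g | [:: g; h] => g * h | _ => 0 end.

(* Value on a(deg p) (x) gs of
     sum_{r+s+t=N, r,s>=1} (-1)^{r+st} f_{r+t+1} (1^{(x)r} (x) mu_s (x) 1^{(x)t}),
   N = size gs + 1, with the Koszul sign (-1)^{|mu_s| * (p + deg of the first r-1 gs)}. *)
Definition mu_terms (V W : zmodType) (f : V -> seq C -> W) (p : int) (a : V)
    (gs : seq (C * int)) : W :=
  let N := (size gs).+1 in
  \sum_(1 <= r < N) \sum_(1 <= s < (N - r).+1)
    let t := (N - r - s)%N in
    let pre := take r.-1 gs in
    let mid := take s (drop r.-1 gs) in
    let post := drop (r.-1 + s) gs in
    f a (els pre ++ mu (els mid) :: els post)
      *~ (koz (r%:Z + (s * t)%:Z) * koz ((s%:Z - 2) * (p + degs pre))).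

(* multilinearity of a map V (x) C^{(x) n-1} -> W, written f a [:: c_1; ..; c_{n-1}] *)
Definition multilinear (V W : zmodType) (f : V -> seq C -> W) : Prop :=
  (forall a b gs, f (a + b) gs = f a gs + f b gs) /\
  (forall a pre post g h,
     f a (pre ++ (g + h) :: post) = f a (pre ++ g :: post) + f a (pre ++ h :: post)).

(* A_oo-module: nu a [:: c_1; ..; c_{n-1}] stands for nu_n (a (x) c_1 (x) .. (x) c_{n-1}) *)
Definition Ainf_module (A : zmodType) (Ad : int -> {pred A}) (nu : A -> seq C -> A) : Prop :=
  [/\ graded_sub Ad, multilinear nu,
      (forall p a gs, a \in Ad p -> homs gs ->
         nu a (els gs) \in Ad (p + degs gs + (size gs)%:Z - 1)) &
      (forall p a gs, a \in Ad p -> homs gs ->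
         let N := (size gs).+1 in
         \sum_(1 <= s < N.+1) nu (nu a (take s.-1 (els gs))) (drop s.-1 (els gs))
             *~ koz (s * (N - s))%:Z
         + mu_terms nu p a gs = 0)].

(* A_oo-morphism: phi a [:: c_1; ..; c_{n-1}] stands for phi_n (a (x) c_1 (x) ..) *)
Definition Ainf_morphism (A : zmodType) (Ad : int -> {pred A}) (nuA : A -> seq C -> A)
    (B : zmodType) (Bd : int -> {pred B}) (nuB : B -> seq C -> B)
    (phi : A -> seq C -> B) : Prop :=
  [/\ multilinear phi,
      (forall p a gs, a \in Ad p -> homs gs ->
         phi a (els gs) \in Bd (p + degs gs + (size gs)%:Z)) &
      (forall p a gs, a \in Ad p -> homs gs ->
         let N := (size gs).+1 in
         \sum_(1 <= s < N.+1) phi (nuA a (take s.-1 (els gs))) (drop s.-1 (els gs))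
             *~ koz (s * (N - s))%:Z
         + mu_terms phi p a gs
         = \sum_(1 <= s < N.+1) nuB (phi a (take s.-1 (els gs))) (drop s.-1 (els gs))
             *~ koz (s.+1 * (N - s))%:Z)].

Variable Crit : finType.
Variable ind : Crit -> nat.
Variable m : Crit -> Crit -> C.

Definition twisting_cocycle : Prop :=
  (forall x y, m x y \in Cd ((ind x)%:Z - (ind y)%:Z - 1)) /\
  (forall x y, d (m x y) = \sum_(z : Crit) (m x z * m z y) *~ koz ((ind x)%:Z - (ind z)%:Z)).

(* elementary tensor a (x) g_1 (x) .. (x) g_k (x) x in V (x) T C (x) Z Crit,
   with the degrees of a and of the g_i recorded *)
Record word (V : Type) := Word { wa : V; wdeg : int; wgs : seq (C * int); wx : Crit }.

(* m~ (a (x) gs (x) x) = (1^{(x) k+1} (x) m)(a (x) gs (x) x)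
   = sum_y (-1)^{|m| (|a| + |gs|)} a (x) gs (x) m_{x,y} (x) y,  with |m| = -1 *)
Definition mtilde (V : Type) (w : word V) : seq (int * word V) :=
  [seq (koz (- (wdeg w + degs (wgs w))),
        Word (wa w) (wdeg w)
             (rcons (wgs w) (m (wx w) y, (ind (wx w))%:Z - (ind y)%:Z - 1)) y)
  | y <- enum Crit].

(* linear extension of m~ to formal Z-combinations of elementary tensors *)
Definition mtilde_lin (V : Type) (ws : seq (int * word V)) : seq (int * word V) :=
  flatten [seq [seq (cw.1 * cw'.1, cw'.2) | cw' <- mtilde cw.2] | cw <- ws].

(* (f (x) 1) applied to a formal combination; the result lives in W (x) Z Crit,
   represented as {ffun Crit -> W} *)
Definition apply_f1 (V W : zmodType) (f : V -> seq C -> W) (ws : seq (int * word V))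
    : {ffun Crit -> W} :=
  \sum_(cw <- ws)
    [ffun y => if y == wx cw.2 then f (wa cw.2) (els (wgs cw.2)) *~ cw.1 else 0].

(* sum_{n >= 0} (f_{n+1} (x) 1) m~^n, on a homogeneous element of total degree k of
   V (x) Z Crit = sum_x c_x (x) x  (c_x of degree k - |x|).  The terms with
   n >= #|Crit| vanish (m_{x,y} = 0 unless |x| > |y|), so the sum is truncated. *)
Definition twisted_op (V W : zmodType) (f : V -> seq C -> W) (k : int)
    (c : {ffun Crit -> V}) : {ffun Crit -> W} :=
  \sum_(x : Crit) \sum_(n < #|Crit|.+1)
     apply_f1 f (iter n (@mtilde_lin V) [:: (1, Word (c x) (k - (ind x)%:Z) [::] x)]).

End AInfinity.

From HB Require Import structures.
From mathcomp Require Import all_boot all_order all_algebra zify ring.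
Import Order.TTheory GRing.Theory Num.Theory.
Local Open Scope ring_scope.
Set Implicit Arguments. Unset Strict Implicit. Unset Printing Implicit Defensive.

(* Unfolding m~^n, the map sum_n (f_{n+1} (x) 1) m~^n sends a (x) x to a signed sum, over
   all paths x = y_0, y_1, ..., y_n of critical points, of
   f_{n+1}(a (x) m_{y_0 y_1} (x) ... (x) m_{y_(n-1) y_n}) (x) y_n; paths of length at least
   #Crit contribute nothing, because m_{x,y} = 0 unless |x| > |y|.  The composite of two
   twisted maps is then a sum over all paths of all the ways to cut the path in two, and
   the A_oo-morphism relation for phi, applied to the labels of each path, turns
   nu^B~ phi~ into phi~ nu^A~ up to the terms where mu_1 or mu_2 hits the labels.  These
   cancel by the twisting cocycle equation: the mu_1-term at an edge u -> v of a path of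
   length N is minus the sum of the mu_2-terms at the subdivisions u -> w -> v in paths
   of length N + 1, so their total telescopes to zero. *)

Lemma kozE (z : int) : koz z = (-1) ^ z.
Proof. by case: z => n //; rewrite NegzE /koz abszN exprNn invrN1 -signr_odd. Qed.

Lemma kozD (a b : int) : koz (a + b) = koz a * koz b.
Proof. by rewrite !kozE exprzDr ?unitrN1. Qed.

Lemma kozN (z : int) : koz (- z) = koz z.
Proof. by rewrite /koz abszN. Qed.

Lemma kozS (z : int) : koz (z + 1) = - koz z.
Proof. by rewrite kozD /koz expr1 mulrN1. Qed.

Lemma kozX (j : int) (n : nat) : koz j ^+ n = koz (j * n%:Z).
Proof. by rewrite !kozE -exprz_exp. Qed.

Lemma koz_congr (a b : int) : (2 %| a - b)%Z -> koz a = koz b.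
Proof.
case/dvdzP => q e; rewrite -(subrK b a) e kozD -kozX.
by rewrite /koz -exprM mulnC exprM sqrrN !expr1n mul1r.
Qed.

Lemma sum_triangle (V : zmodType) (Q : nat -> nat -> V) M :
  \sum_(i < M) \sum_(j < M - i) Q i j = \sum_(N < M) \sum_(i < N.+1) Q i (N - i)%N.
Proof.
elim: M => [|M IH]; first by rewrite !big_ord0.
rewrite big_ord_recr [RHS]big_ord_recr -IH /= subSnn big_ord1.
rewrite [in RHS]big_ord_recr /= subnn addrA -big_split /=; congr (_ + _).
by apply: eq_bigr => i _; rewrite subSn ?(ltnW (ltn_ord i)) // big_ord_recr.
Qed.

Section SeqsOfSize.
Variable T : finType.

Fixpoint all_seqs (n : nat) : seq (seq T) :=
  if n is n'.+1 then [seq y :: ys | y <- enum T, ys <- all_seqs n'] else [:: [::]].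

Lemma size_all_seqs n ys : ys \in all_seqs n -> size ys = n.
Proof.
elim: n ys => [|n IH] ys /=; first by rewrite inE => /eqP ->.
by case/allpairsP => -[y ys'] [_ /IH /= <- ->].
Qed.

Variable V : zmodType.

Lemma big_all_seqsS n (F : seq T -> V) :
  \sum_(ys <- all_seqs n.+1) F ys = \sum_(y : T) \sum_(ys <- all_seqs n) F (y :: ys).
Proof. by rewrite big_allpairs_dep big_enum. Qed.

Lemma big_all_seqs_cat n1 n2 (F : seq T -> V) :
  \sum_(ys <- all_seqs (n1 + n2)) F ys
  = \sum_(ys1 <- all_seqs n1) \sum_(ys2 <- all_seqs n2) F (ys1 ++ ys2).
Proof.
elim: n1 F => [|n1 IH] F; first by rewrite big_seq1.
by rewrite addSn !big_all_seqsS; apply: eq_bigr => y _; rewrite IH.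
Qed.

Lemma big_all_seqs_pairs n (G : seq T -> seq T -> V) :
  (forall ys1 ys2, (n < size ys1 + size ys2)%N -> G ys1 ys2 = 0) ->
  \sum_(n1 < n.+1) \sum_(ys1 <- all_seqs n1) \sum_(n2 < n.+1) \sum_(ys2 <- all_seqs n2)
     G ys1 ys2
  = \sum_(N < n.+1) \sum_(ys <- all_seqs N) \sum_(i < N.+1) G (take i ys) (drop i ys).
Proof.
move=> G0; pose Q i j := \sum_(ys1 <- all_seqs i) \sum_(ys2 <- all_seqs j) G ys1 ys2.
transitivity (\sum_(i < n.+1) \sum_(j < n.+1 - i) Q i j).
  apply: eq_bigr => i _; rewrite exchange_big (big_ord_widen _ _ (leq_subr i n.+1)).
  rewrite [RHS]big_mkcond; apply: eq_bigr => j _ /=; rewrite /Q.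
  case: ltnP => // hj; rewrite big_seq big1 // => ys1 /size_all_seqs hs1.
  rewrite big_seq big1 // => ys2 /size_all_seqs hs2; apply: G0; rewrite hs1 hs2; lia.
rewrite sum_triangle; apply: eq_bigr => N _; rewrite exchange_big /=.
apply: eq_bigr => i _; have hi : (i <= N)%N by rewrite -ltnS.
rewrite -[X in all_seqs X](subnKC hi) big_all_seqs_cat.
apply: eq_big_seq => ys1 /size_all_seqs hs1; apply: eq_bigr => ys2 _.
by rewrite -hs1 take_size_cat // drop_size_cat.
Qed.

End SeqsOfSize.

Section Additive.
Variables (V W : zmodType) (f : V -> W).
Hypothesis fD : {morph f : a b / a + b}.

Lemma addmorph0 : f 0 = 0.
Proof. by apply: (addrI (f 0)); rewrite -fD !addr0. Qed.

Lemma addmorph_sum I (r : seq I) (P : pred I) (F : I -> V) :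
  f (\sum_(i <- r | P i) F i) = \sum_(i <- r | P i) f (F i).
Proof. exact: (big_morph f fD addmorph0). Qed.

Lemma addmorphN a : f (- a) = - f a.
Proof. by apply: (addrI (f a)); rewrite -fD !subrr addmorph0. Qed.

Lemma addmorphMz a (z : int) : f (a *~ z) = f a *~ z.
Proof.
have fMn n : f (a *+ n) = f a *+ n.
  by elim: n => [|n IH]; rewrite ?mulr0n ?addmorph0 // !mulrS fD IH.
by case: z => n; rewrite ?NegzE ?mulrNz ?addmorphN fMn.
Qed.

End Additive.

Lemma pairmap_take (T U : Type) (f : T -> T -> U) x s i :
  pairmap f x (take i s) = take i (pairmap f x s).
Proof. by elim: s x i => [|y s IH] x [|i] //=; rewrite IH. Qed.

Lemma pairmap_drop (T U : Type) (f : T -> T -> U) x s i :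
  pairmap f (last x (take i s)) (drop i s) = drop i (pairmap f x s).
Proof. by elim: s x i => [|y s IH] x [|i] //=; rewrite IH. Qed.

Section Paths.
Variables (C : nzRingType) (Crit : finType) (ind : Crit -> nat) (m : Crit -> Crit -> C).

Definition edge_label (x y : Crit) : C * int := (m x y, (ind x)%:Z - (ind y)%:Z - 1).

Local Notation path_labels := (pairmap edge_label).

(* (-1) ^ path_exp k x ys is the Koszul sign picked up by applying m~ successively along
   the path x, ys to a tensor of total degree k. *)
Fixpoint path_exp (k : int) (x : Crit) (ys : seq Crit) : int :=
  if ys is y :: ys' then k - (ind x)%:Z + path_exp (k - 1) y ys' else 0.

Lemma degs_path_labels x ys :
  degs (path_labels x ys) = (ind x)%:Z - (ind (last x ys))%:Z - (size ys)%:Z.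
Proof.
elim: ys x => [|y ys IH] x /=; first by rewrite /degs big_nil subrr subr0.
rewrite /degs big_cons -/(degs _) IH /=; lia.
Qed.

Lemma path_exp_cat k x ys1 ys2 :
  path_exp k x (ys1 ++ ys2)
  = path_exp k x ys1 + path_exp (k - (size ys1)%:Z) (last x ys1) ys2.
Proof.
elim: ys1 k x => [|y ys IH] k x /=; first by rewrite subr0 add0r.
by rewrite IH addrA; congr (_ + path_exp _ _ _); lia.
Qed.

Lemma path_expD k j x ys : path_exp (k + j) x ys = path_exp k x ys + j * (size ys)%:Z.
Proof.
elim: ys k x => [|y ys IH] k x /=; first by rewrite mulr0 addr0.
by rewrite [k + j - 1]addrAC IH -addn1 PoszD; ring.
Qed.

Lemma path_exp_take_drop k k' x ys i : (i <= size ys)%N ->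
  path_exp k x (take i ys) + path_exp k' (last x (take i ys)) (drop i ys)
  = path_exp k x ys + (k' - k + i%:Z) * (size ys - i)%:Z.
Proof.
move=> hi; rewrite -[in RHS](cat_take_drop i ys) path_exp_cat size_takel // -addrA.
rewrite cat_take_drop -size_drop -path_expD; congr (_ + path_exp _ _ _); ring.
Qed.

End Paths.

Definition tens (Crit : finType) (W : zmodType) (w : W) (y : Crit) : {ffun Crit -> W} :=
  [ffun z => if z == y then w else 0].

Lemma tensD (Crit : finType) (W : zmodType) (y : Crit) :
  {morph (@tens Crit W)^~ y : u v / u + v}.
Proof. by move=> u v; apply/ffunP => z; rewrite !ffunE; case: eqP; rewrite ?addr0. Qed.

Section Expansion.
Variables (C : nzRingType) (Crit : finType) (ind : Crit -> nat) (m : Crit -> Crit -> C).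
Variables (V W : zmodType) (f : V -> seq C -> W).

Local Notation mtl := (@mtilde_lin C Crit ind m V).
Local Notation path_labels := (pairmap (edge_label ind m)).
Local Notation path_exp := (path_exp ind).

Definition total_deg (w : word C Crit V) := wdeg w + degs (wgs w) + (ind (wx w))%:Z.

Lemma iter_mtilde_lin_cat n l1 l2 : iter n mtl (l1 ++ l2) = iter n mtl l1 ++ iter n mtl l2.
Proof.
by elim: n => [|n IH] //=; rewrite IH /mtilde_lin map_cat flatten_cat.
Qed.

Lemma apply_f1_iter n l :
  apply_f1 f (iter n mtl l) = \sum_(cw <- l) apply_f1 f (iter n mtl [:: cw]).
Proof.
elim: l => [|cw l IH]; last by rewrite big_cons -IH -big_cat -iter_mtilde_lin_cat.
have iter_nil k : iter k mtl [::] = [::] by elim: k => //= k ->.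
by rewrite iter_nil big_nil /apply_f1 big_nil.
Qed.

Lemma apply_f1_iter_mtilde n c w :
  apply_f1 f (iter n mtl [:: (c, w)])
  = \sum_(ys <- all_seqs Crit n)
      tens (f (wa w) (els (wgs w ++ path_labels (wx w) ys))
              *~ (c * koz (path_exp (total_deg w) (wx w) ys))) (last (wx w) ys).
Proof.
elim: n c w => [|n IH] c w; first by rewrite /apply_f1 !big_seq1 cats0 mulr1.
rewrite iterSr /mtilde_lin /= cats0 -map_comp apply_f1_iter big_map big_enum.
rewrite big_all_seqsS; apply: eq_bigr => y _; rewrite IH; apply: eq_bigr => ys _ /=.
rewrite cat_rcons kozD mulrA; congr (tens (_ *~ (_ * koz (path_exp _ _ _))) _).
  by rewrite /total_deg addrK kozN.
by rewrite /total_deg /= /degs -cats1 big_cat big_seq1 /=; ring.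
Qed.

Lemma twisted_opE k c :
  twisted_op ind m f k c
  = \sum_(x : Crit) \sum_(n < #|Crit|.+1) \sum_(ys <- all_seqs Crit n)
      tens (f (c x) (els (path_labels x ys)) *~ koz (path_exp k x ys)) (last x ys).
Proof.
apply: eq_bigr => x _; apply: eq_bigr => n _; rewrite apply_f1_iter_mtilde.
by apply: eq_bigr => ys _; rewrite /total_deg /degs big_nil addr0 subrK mul1r.
Qed.

Hypothesis fD : forall a b gs, f (a + b) gs = f a gs + f b gs.

Lemma twisted_opD k : {morph twisted_op ind m f k : c1 c2 / c1 + c2}.
Proof.
move=> c1 c2; rewrite !twisted_opE -big_split; apply: eq_bigr => x _.
rewrite -big_split; apply: eq_bigr => n _; rewrite -big_split; apply: eq_bigr => ys _.
by rewrite ffunE fD mulrzDl tensD.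
Qed.

Lemma twisted_op_tens k a y :
  twisted_op ind m f k (tens a y)
  = \sum_(n < #|Crit|.+1) \sum_(ys <- all_seqs Crit n)
      tens (f a (els (path_labels y ys)) *~ koz (path_exp k y ys)) (last y ys).
Proof.
rewrite twisted_opE (bigD1 y) //= [X in _ + X]big1 ?addr0 => [|x /negbTE xNy].
  by rewrite ffunE eqxx.
apply: big1 => n _; apply: big1 => ys _; rewrite ffunE xNy.
by rewrite (addmorph0 (fun a b => fD a b _)) mul0rz (addmorph0 (@tensD _ _ _)).
Qed.

End Expansion.


Lemma multilinear_eq0 (C : nzRingType) (V W : zmodType) (f : V -> seq C -> W) a l :
  multilinear f -> 0 \in l -> f a l = 0.
Proof.
by move=> [_ fS] /splitPr [pre post]; apply: (addmorph0 (fS a pre post)).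
Qed.

Section Composition.
Variables (C : nzRingType) (Cd : int -> {pred C}).
Variables (Crit : finType) (ind : Crit -> nat) (m : Crit -> Crit -> C).
Hypothesis m_deg : forall x y, m x y \in Cd ((ind x)%:Z - (ind y)%:Z - 1).
Hypothesis Cd_neg : forall q g, q < 0 -> g \in Cd q -> g = 0.

Local Notation path_labels := (pairmap (edge_label ind m)).
Local Notation path_exp := (path_exp ind).

(* A nonzero label m_{x,y} forces |x| > |y|, so a path without zero labels repeats no
   vertex. *)
Lemma path_labels_long x ys : (#|Crit| <= size ys)%N -> 0 \in els (path_labels x ys).
Proof.
move=> long; apply/negPn/negP => nz.
have dec y zs : 0 \notin els (path_labels y zs) -> path [rel a b | ind b < ind a]%N y zs.
  elim: zs y => [|z zs IH] y //=; rewrite inE negb_or => /andP [myz nz'].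
  rewrite IH // andbT ltnNge; apply: contra myz => le.
  by apply/eqP/esym/(Cd_neg _ (m_deg y z)); lia.
have := @sorted_uniq _ [rel a b | ind b < ind a]%N
  (fun _ _ _ h1 h2 => ltn_trans h2 h1) (fun a => ltnn _) (x :: ys) (dec x ys nz).
move/card_uniqP => card; have := max_card (mem (x :: ys)); by rewrite card ltnNge long.
Qed.

Lemma homs_path_labels x ys : homs Cd (path_labels x ys).
Proof. by elim: ys x => [|y ys IH] x //=; rewrite m_deg IH. Qed.

Variables (U V W : zmodType) (g : U -> seq C -> V) (f : V -> seq C -> W).
Hypotheses (g_ml : multilinear g) (f_ml : multilinear f).

Lemma twisted_op_comp k k' c :
  twisted_op ind m f k' (twisted_op ind m g k c)
  = \sum_(x : Crit) \sum_(n1 < #|Crit|.+1) \sum_(ys1 <- all_seqs Crit n1)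
      \sum_(n2 < #|Crit|.+1) \sum_(ys2 <- all_seqs Crit n2)
        tens (f (g (c x) (els (path_labels x ys1))) (els (path_labels (last x ys1) ys2))
                *~ koz (path_exp k x ys1 + path_exp k' (last x ys1) ys2))
             (last x (ys1 ++ ys2)).
Proof.
have [fD _] := f_ml.
rewrite [twisted_op _ _ g _ _]twisted_opE !(addmorph_sum (twisted_opD ind m fD k')).
apply: eq_bigr => x _; rewrite (addmorph_sum (twisted_opD ind m fD k')).
apply: eq_bigr => n1 _; rewrite (addmorph_sum (twisted_opD ind m fD k')).
apply: eq_bigr => ys1 _; rewrite (twisted_op_tens ind m fD).
apply: eq_bigr => n2 _; apply: eq_bigr => ys2 _.
by rewrite (addmorphMz (fun a b => fD a b _)) -mulrzA -kozD last_cat.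
Qed.


Lemma twisted_op_compE k k' c :
  twisted_op ind m f k' (twisted_op ind m g k c)
  = \sum_(x : Crit) \sum_(N < #|Crit|.+1) \sum_(ys <- all_seqs Crit N)
      tens ((\sum_(i < N.+1)
               f (g (c x) (take i (els (path_labels x ys)))) (drop i (els (path_labels x ys)))
                 *~ koz ((k' - k + i%:Z) * (N - i)%:Z)) *~ koz (path_exp k x ys))
           (last x ys).
Proof.
have [fD _] := f_ml; rewrite twisted_op_comp; apply: eq_bigr => x _.
rewrite (big_all_seqs_pairs (G := fun ys1 ys2 =>
  tens (f (g (c x) (els (path_labels x ys1))) (els (path_labels (last x ys1) ys2))
          *~ koz (path_exp k x ys1 + path_exp k' (last x ys1) ys2)) (last x (ys1 ++ ys2)))).
  apply: eq_bigr => N _; apply: eq_big_seq => ys /size_all_seqs hs.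
  rewrite mulrz_suml (addmorph_sum (@tensD _ _ _)); apply: eq_bigr => i _.
  have hi : (i <= size ys)%N by rewrite hs -ltnS.
  rewrite cat_take_drop pairmap_take pairmap_drop /els map_take map_drop.
  by rewrite path_exp_take_drop // hs kozD mulrC mulrzA.
move=> ys1 ys2 long; have := @path_labels_long x (ys1 ++ ys2).
rewrite size_cat pairmap_cat /els map_cat mem_cat => /(_ (ltnW long)) /orP [z1|z2].
  by rewrite (multilinear_eq0 _ g_ml z1) (addmorph0 (fun a b => fD a b _)) mul0rz
    (addmorph0 (@tensD _ _ _)).
by rewrite (multilinear_eq0 _ f_ml z2) mul0rz (addmorph0 (@tensD _ _ _)).
Qed.

End Composition.

Section MuTerms.
Variables (C : nzRingType) (d : C -> C) (V W : zmodType) (f : V -> seq C -> W).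
Hypotheses (f_ml : multilinear f) (dD : {morph d : g h / g + h}).

Definition mu_term p (a : V) (gs : seq (C * int)) r s :=
  f a (els (take r.-1 gs) ++ mu d (els (take s (drop r.-1 gs))) :: els (drop (r.-1 + s) gs))
    *~ (koz (r%:Z + (s * ((size gs).+1 - r - s))%:Z)
        * koz ((s%:Z - 2) * (p + degs (take r.-1 gs)))).

Lemma mu_terms_split p a gs :
  mu_terms d f p a gs = \sum_(1 <= r < (size gs).+1) mu_term p a gs r 1
                      + \sum_(1 <= r < size gs) mu_term p a gs r 2.
Proof.
have mu3 l : (3 <= size l)%N -> mu d l = 0 by case: l => [|? [|? [|? ?]]].
set n := size gs.
have -> : mu_terms d f p a gs
          = \sum_(1 <= r < n.+1) \sum_(1 <= s < (n.+1 - r).+1) mu_term p a gs r s by [].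
transitivity (\sum_(1 <= r < n.+1)
                (mu_term p a gs r 1 + if (r < n)%N then mu_term p a gs r 2 else 0)).
  apply: eq_big_nat => r /andP [r_gt0 r_le]; rewrite big_nat_recl; last by lia.
  congr (_ + _); case: ltnP => r_lt; last by rewrite big_geq //; lia.
  rewrite subSn ?(ltnW r_lt) // big_nat_recl ?subn_gt0 //.
  rewrite big_nat_cond big1 ?addr0 // => s /andP [/andP [s_ge s_lt] _].
  rewrite /mu_term (multilinear_eq0 _ f_ml) ?mul0rz // mu3 ?mem_cat ?inE ?eqxx ?orbT //.
  by rewrite /els size_map size_take size_drop; case: ifP; lia.
rewrite big_split /=; congr (_ + _); case: n => [|n]; first by rewrite !big_geq.
by rewrite big_nat_recr //= ltnn addr0; apply: eq_big_nat => r /andP [_ ->].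
Qed.

Lemma mu_term_cat p a pre mid post :
  mu_term p a (pre ++ mid ++ post) (size pre).+1 (size mid)
  = f a (els pre ++ mu d (els mid) :: els post)
      *~ (koz ((size pre).+1%:Z + (size mid * size post)%:Z)
          * koz (((size mid)%:Z - 2) * (p + degs pre))).
Proof.
rewrite /mu_term /= take_size_cat // addnC -drop_drop drop_size_cat //.
rewrite take_size_cat // drop_size_cat // !size_cat.
by congr (_ *~ (koz (_ + (_ * _)%:Z) * _)); lia.
Qed.

Lemma mu_term_eq0 p a gs r s : 0 \in els gs -> mu_term p a gs r s = 0.
Proof.
have mu0 l : 0 \in l -> mu d l = 0.
  case: l => [|g [|h [|? ?]]] //=; rewrite ?inE.
    by move/eqP <-; apply: addmorph0.
  by case/orP => /eqP <-; rewrite ?mul0r ?mulr0.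
rewrite -{1}(cat_take_drop r.-1 gs) -(cat_take_drop s (drop r.-1 gs)) drop_drop addnC.
move=> z; rewrite /mu_term (multilinear_eq0 _ f_ml) ?mul0rz //.
move: z; rewrite /els !map_cat !mem_cat => /or3P [] z.
- by apply/orP; left.
- by rewrite (mu0 _ z) inE eqxx orbT.
- by rewrite inE z !orbT.
Qed.

End MuTerms.

Section MuCancel.
Variables (C : nzRingType) (Cd : int -> {pred C}) (d : C -> C).
Variables (Crit : finType) (ind : Crit -> nat) (m : Crit -> Crit -> C).
Variables (V W : zmodType) (f : V -> seq C -> W).
Hypotheses (f_ml : multilinear f) (dD : {morph d : g h / g + h}).
Hypothesis m_cocycle :
  forall x y, d (m x y) = \sum_(z : Crit) (m x z * m z y) *~ koz ((ind x)%:Z - (ind z)%:Z).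
Hypothesis m_deg : forall x y, m x y \in Cd ((ind x)%:Z - (ind y)%:Z - 1).
Hypothesis Cd_neg : forall q g, q < 0 -> g \in Cd q -> g = 0.

Local Notation path_labels := (pairmap (edge_label ind m)).
Local Notation path_exp := (path_exp ind).
Local Notation mu_term := (mu_term d f).

(* The twisting cocycle equation, read along a path. *)
Lemma mu1_term_subdivide k x a pre v post :
  mu_term (k - (ind x)%:Z) a (path_labels x (pre ++ v :: post)) (size pre).+1 1
    *~ koz (path_exp k x (pre ++ v :: post))
  = - \sum_(w : Crit) mu_term (k - (ind x)%:Z) a (path_labels x (pre ++ w :: v :: post))
                                (size pre).+1 2
        *~ koz (path_exp k x (pre ++ w :: v :: post)).
Proof.
have [_ fS] := f_ml; set u := last x pre.
have lab1 : path_labels x (pre ++ v :: post)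
            = path_labels x pre ++ [:: edge_label ind m u v] ++ path_labels v post.
  by rewrite pairmap_cat.
have lab2 w : path_labels x (pre ++ w :: v :: post)
    = path_labels x pre ++ [:: edge_label ind m u w; edge_label ind m w v]
        ++ path_labels v post.
  by rewrite pairmap_cat.
rewrite lab1 -(size_pairmap (edge_label ind m) x pre) (mu_term_cat d f _ _ _ [:: _]).
rewrite [mu _ _]/= m_cocycle (addmorph_sum (fS _ _ _)) !mulrz_suml -sumrN.
apply: eq_bigr => w _; rewrite lab2 (mu_term_cat d f _ _ _ [:: _; _]) [mu _ _]/=.
rewrite (addmorphMz (fS _ _ _)) -!mulrzA -mulrNz; congr (_ *~ _).
rewrite !path_exp_cat /= degs_path_labels !size_pairmap -/u.
rewrite [path_exp (_ - 1 - 1) _ _]path_expD -!kozD -kozS; apply: koz_congr.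
by move: (path_exp _ _ _) (path_exp _ _ _) => E E'; lia.
Qed.

Variables (k : int) (x : Crit) (a : V).

Local Notation mu_path_term s r ys :=
  (tens (mu_term (k - (ind x)%:Z) a (path_labels x ys) r s *~ koz (path_exp k x ys))
        (last x ys)).

Definition mu2_paths N :=
  \sum_(ys <- all_seqs Crit N) \sum_(1 <= r < N) mu_path_term 2 r ys.

Lemma mu1_paths_sum N :
  \sum_(ys <- all_seqs Crit N) \sum_(1 <= r < N.+1) mu_path_term 1 r ys = - mu2_paths N.+1.
Proof.
rewrite /mu2_paths exchange_big [in RHS]exchange_big -sumrN.
apply: eq_big_nat => -[//|r] /andP [_ r_lt].
have [n ->] : exists n, N = (r + n.+1)%N by exists (N - r.+1)%N; lia.
rewrite -addnS !big_all_seqs_cat -sumrN; apply: eq_big_seq => pre /size_all_seqs <-.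
rewrite !big_all_seqsS; under [in RHS]eq_bigr do rewrite big_all_seqsS.
rewrite [in RHS]exchange_big -sumrN; apply: eq_bigr => v _.
rewrite [in RHS]exchange_big -sumrN; apply: eq_bigr => post _.
rewrite mu1_term_subdivide (addmorphN (@tensD _ _ _)) (addmorph_sum (@tensD _ _ _)).
by congr (- _); apply: eq_bigr => w _; rewrite !last_cat.
Qed.

Lemma mu_terms_paths_eq0 :
  \sum_(N < #|Crit|.+1) \sum_(ys <- all_seqs Crit N)
     tens (mu_terms d f (k - (ind x)%:Z) a (path_labels x ys) *~ koz (path_exp k x ys))
          (last x ys) = 0.
Proof.
have mu12 N : \sum_(ys <- all_seqs Crit N)
     tens (mu_terms d f (k - (ind x)%:Z) a (path_labels x ys) *~ koz (path_exp k x ys))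
          (last x ys)
   = \sum_(ys <- all_seqs Crit N) \sum_(1 <= r < N.+1) mu_path_term 1 r ys + mu2_paths N.
  rewrite -big_split; apply: eq_big_seq => ys /size_all_seqs hs.
  rewrite mu_terms_split // size_pairmap hs mulrzDl tensD !mulrz_suml.
  by rewrite !(addmorph_sum (@tensD _ _ _)).
have mu2_0 : mu2_paths 0 = 0 by rewrite /mu2_paths big_seq1 big_geq.
have mu2_long : mu2_paths #|Crit|.+1 = 0.
  rewrite /mu2_paths big_seq big1 // => ys /size_all_seqs hs; rewrite big1 // => r _.
  rewrite (mu_term_eq0 f_ml dD) ?mul0rz ?(addmorph0 (@tensD _ _ _)) //.
  by apply: (path_labels_long m_deg Cd_neg); rewrite hs.
under eq_bigr do rewrite mu12 mu1_paths_sum.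
rewrite -(big_mkord xpredT (fun N => - mu2_paths N.+1 + mu2_paths N)).
transitivity (- \sum_(0 <= N < #|Crit|.+1) (mu2_paths N.+1 - mu2_paths N)).
  by rewrite -sumrN; apply: eq_bigr => N _; rewrite opprB addrC.
by rewrite telescope_sumr // mu2_long mu2_0 subrr oppr0.
Qed.

End MuCancel.

Section Graded.
Variables (V : zmodType) (Vd : int -> {pred V}).
Hypothesis V_graded : graded_sub Vd.

Lemma graded0 q : 0 \in Vd q.
Proof. by case: (V_graded q). Qed.

Lemma gradedN q u : u \in Vd q -> - u \in Vd q.
Proof. by case: (V_graded q) => V0 VB uq; rewrite -sub0r VB. Qed.

Lemma gradedD q u v : u \in Vd q -> v \in Vd q -> u + v \in Vd q.
Proof. by case: (V_graded q) => _ VB uq vq; rewrite -[v]opprK VB ?gradedN. Qed.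

Lemma gradedMz q u (z : int) : u \in Vd q -> u *~ z \in Vd q.
Proof.
move=> uq; have uMn n : u *+ n \in Vd q.
  by elim: n => [|n IH]; rewrite ?mulr0n ?graded0 // mulrS gradedD.
by case: z => n; rewrite ?NegzE ?mulrNz ?gradedN ?uMn.
Qed.

Lemma graded_sum q I (r : seq I) (P : pred I) (F : I -> V) :
  (forall i, P i -> F i \in Vd q) -> \sum_(i <- r | P i) F i \in Vd q.
Proof. by move=> Fq; elim/big_rec: _ => [|i u Pi uq]; rewrite ?graded0 ?gradedD ?Fq. Qed.

End Graded.

Lemma twisted_op_homogeneous (C : nzRingType) (Cd : int -> {pred C})
    (Crit : finType) (ind : Crit -> nat) (m : Crit -> Crit -> C)
    (A B : zmodType) (Ad : int -> {pred A}) (Bd : int -> {pred B}) (phi : A -> seq C -> B)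
    (k : int) (c : {ffun Crit -> A}) :
  graded_sub Bd ->
  (forall x y, m x y \in Cd ((ind x)%:Z - (ind y)%:Z - 1)) ->
  (forall p a gs, a \in Ad p -> homs Cd gs ->
     phi a (els gs) \in Bd (p + degs gs + (size gs)%:Z)) ->
  (forall x, c x \in Ad (k - (ind x)%:Z)) ->
  forall y, twisted_op ind m phi k c y \in Bd (k - (ind y)%:Z).
Proof.
move=> B_graded m_deg phi_deg c_deg y; rewrite twisted_opE !sum_ffunE.
apply: graded_sum => // x _; rewrite sum_ffunE; apply: graded_sum => // n _.
rewrite sum_ffunE; apply: graded_sum => // ys _; rewrite ffunE.
case: eqP => [->|_]; last exact: graded0.
apply: gradedMz => //; have := phi_deg _ _ _ (c_deg x) (homs_path_labels m_deg x ys).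
by rewrite degs_path_labels size_pairmap; congr (_ \in Bd _); ring.
Qed.

Lemma Ainf_morphism_reindex (C : nzRingType) (Cd : int -> {pred C}) (d : C -> C)
    (A : zmodType) (Ad : int -> {pred A}) (nuA : A -> seq C -> A)
    (B : zmodType) (Bd : int -> {pred B}) (nuB : B -> seq C -> B)
    (phi : A -> seq C -> B) p a gs :
  Ainf_morphism Cd d Ad nuA Bd nuB phi -> a \in Ad p -> homs Cd gs ->
  let M := els gs in
  \sum_(i < (size gs).+1) nuB (phi a (take i M)) (drop i M) *~ koz (i%:Z * (size gs - i)%:Z)
  = \sum_(i < (size gs).+1) phi (nuA a (take i M)) (drop i M)
                            *~ koz ((i%:Z - 1) * (size gs - i)%:Z)
    + mu_terms d phi p a gs.
Proof.
move=> [_ _ phi_rel] ap hgs M; have := phi_rel _ _ _ ap hgs.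
rewrite /= !big_add1 /= !big_mkord => phi_eq.
transitivity (\sum_(i < (size gs).+1)
  nuB (phi a (take i M)) (drop i M) *~ koz (i.+2 * ((size gs).+1 - i.+1))%N).
  apply: eq_bigr => i _; congr (_ *~ _); apply: koz_congr; have := ltn_ord i; nia.
rewrite -phi_eq; congr (_ + _); apply: eq_bigr => i _; congr (_ *~ _).
by apply: koz_congr; have := ltn_ord i; nia.
Qed.

Theorem propositionB (C : nzRingType) (Cd : int -> {pred C}) (d : C -> C)
    (Crit : finType) (ind : Crit -> nat) (m : Crit -> Crit -> C)
    (A : zmodType) (Ad : int -> {pred A}) (nuA : A -> seq C -> A)
    (B : zmodType) (Bd : int -> {pred B}) (nuB : B -> seq C -> B)
    (phi : A -> seq C -> B) :
  is_DGA Cd d ->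
  twisting_cocycle Cd d ind m ->
  Ainf_module Cd d Ad nuA ->
  Ainf_module Cd d Bd nuB ->
  Ainf_morphism Cd d Ad nuA Bd nuB phi ->
  forall (k : int) (c : {ffun Crit -> A}),
    (forall x, c x \in Ad (k - (ind x)%:Z)) ->
    (forall y, twisted_op ind m phi k c y \in Bd (k - (ind y)%:Z)) /\
    twisted_op ind m nuB k (twisted_op ind m phi k c)
    = twisted_op ind m phi (k - 1) (twisted_op ind m nuA k c).
Proof.
move=> [_ [Cd_neg _ _ dD _]] [m_deg m_cocycle] [_ nuA_ml _ _] [B_graded nuB_ml _ _]
  phi_mor k c c_deg.
have [phi_ml phi_deg _] := phi_mor.
split; first exact: (twisted_op_homogeneous B_graded m_deg phi_deg c_deg).
rewrite !(twisted_op_compE m_deg Cd_neg) //; apply: eq_bigr => x _.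
have mu_x := mu_terms_paths_eq0 phi_ml dD m_cocycle m_deg Cd_neg k x (c x).
rewrite -[RHS]addr0 -[X in _ = _ + X]mu_x -big_split; apply: eq_bigr => N _.
rewrite -big_split; apply: eq_big_seq => ys /size_all_seqs <-.
rewrite /= -tensD -mulrzDl; congr (tens (_ *~ _) _).
have sgnB (i : nat) : k - k + i%:Z = i%:Z by rewrite subrr add0r.
have sgnA (i : nat) : k - 1 - k + i%:Z = i%:Z - 1 by ring.
under eq_bigr do rewrite sgnB; under [in RHS]eq_bigr do rewrite sgnA.
rewrite -(size_pairmap (edge_label ind m) x ys).
exact: (Ainf_morphism_reindex phi_mor (c_deg x) (homs_path_labels m_deg x ys)).
Qed.
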